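(* Let $c>1$, $P\in[0,1]^{m\times p}$, $W\in\mathbb{R}^{m\times n}$, $U\in\mathbb{Z}_+^{n\times p}$, and for $\delta\in(0,1]$ let $\gamma_k:=12\log(2np/\delta)\max_{\ell\in[p]}\sqrt{1/U_{k\ell}}$ for $k\in[n]$. For any $\delta\in(0,1]$, any ranking $R\in\mathcal{R}$ satisfying $$\forall\ell\in[p],\ \forall k\in[n]:\ \sum_{i\in[m]}\sum_{j\in[k]}P_{i\ell}R_{ij}\le U_{k\ell}\Big(1+\Big(1-\frac1{2\sqrt c}\Big)\gamma_k\Big)$$ satisfies the $(c\gamma,\delta)$-constraint.
   Context: $\mathcal{R}$ is the set of rankings: matrices $R\in\{0,1\}^{m\times n}$ with $\sum_{j} R_{ij}\le 1$ for every item $i\in[m]$ and $\sum_{i} R_{ij}=1$ for every position $j\in[n]$. Noise model: the groups $G_1,\dots,G_p\subseteq[m]$ are random with $\Pr[i\in G_\ell]=P_{i\ell}$, and events concerning distinct items are independent. For $\varepsilon\in\mathbb{R}^n_{\ge0}$, a ranking $R$ satisfies the $(\varepsilon,\delta)$-constraint if with probability at least $1-\delta$ over the groups, $\sum_{i\in G_\ell}\sum_{j=1}^k R_{ij}\le U_{k\ell}(1+\varepsilon_k)$ for all $k\in[n],\ell\in[p]$. *)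

From HB Require Import structures.
From mathcomp Require Import all_boot all_order all_algebra.
From mathcomp Require Import reals exp.
Set Implicit Arguments. Unset Strict Implicit. Unset Printing Implicit Defensive.
Import Order.TTheory GRing.Theory Num.Theory.
Local Open Scope ring_scope.

(* Rankings: R in {0,1}^{m x n}, each item in at most one position,
   each position filled by exactly one item. *)
Definition is_ranking (R : realType) (m n : nat) (Rk : 'M[R]_(m, n)) : Prop :=
  (forall i j, Rk i j = 0 \/ Rk i j = 1) /\
  (forall i, \sum_(j < n) Rk i j <= 1) /\
  (forall j, \sum_(i < m) Rk i j = 1).

(* Outcome of the noise: for each item i, the set of groups containing i.
   G_l = [set i | l \in x i]. *)
Definition outcome (m p : nat) := {ffun 'I_m -> {set 'I_p}}.

(* A noise model with marginals P and independence across distinct items: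
   the law of the outcome is the product over items of per-item laws q i
   (a distribution on {set 'I_p}, arbitrary correlation among groups for
   the same item), with Pr[i \in G_l] = P i l. *)
Definition noise_model (R : realType) (m p : nat) (P : 'M[R]_(m, p))
    (q : 'I_m -> {set 'I_p} -> R) : Prop :=
  (forall i S, 0 <= q i S) /\
  (forall i, \sum_(S : {set 'I_p}) q i S = 1) /\
  (forall i l, \sum_(S : {set 'I_p} | l \in S) q i S = P i l).

Definition prob (R : realType) (m p : nat) (q : 'I_m -> {set 'I_p} -> R)
    (E : pred (outcome m p)) : R :=
  \sum_(x : outcome m p | E x) \prod_(i < m) q i (x i).

(* Group-count of the top-(k+1) positions (k : 'I_n stands for position k+1). *)
Definition top_count (R : realType) (m n p : nat) (Rk : 'M[R]_(m, n))
    (x : outcome m p) (k : 'I_n) (l : 'I_p) : R :=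
  \sum_(i < m | l \in x i) \sum_(j < n | (j <= k)%N) Rk i j.

Definition satisfies_constraint (R : realType) (m n p : nat)
    (q : 'I_m -> {set 'I_p} -> R) (U : 'I_n -> 'I_p -> nat)
    (Rk : 'M[R]_(m, n)) (eps : 'I_n -> R) (delta : R) : Prop :=
  prob q (fun x => [forall k, forall l,
      top_count Rk x k l <= (U k l)%:R * (1 + eps k)]) >= 1 - delta.

Definition gamma (R : realType) (n p : nat) (U : 'I_n -> 'I_p -> nat)
    (delta : R) (k : 'I_n) : R :=
  12 * ln ((2 * n * p)%:R / delta) *
  \big[Num.max/0]_(l < p) Num.sqrt (((U k l)%:R)^-1).

From HB Require Import structures.
From mathcomp Require Import all_boot all_order all_algebra.
From mathcomp Require Import reals exp sequences.
From mathcomp Require Import ring lra.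
Set Implicit Arguments. Unset Strict Implicit. Unset Printing Implicit Defensive.
Import Order.TTheory GRing.Theory Num.Theory.
Local Open Scope ring_scope.

(* For a fixed pair (k, l), the top-k count of group l is a sum of independent
   Bernoulli variables (a prefix row sum of a ranking is 0 or 1) whose mean is
   the left-hand side of the hypothesis.  A Chernoff bound with parameter
   lambda = gamma / (4 + 3 gamma) bounds the probability that it exceeds
   U (1 + c gamma) by exp (- U gamma^2 / (4 (4 + 3 gamma))), and the choice of
   gamma_k makes this at most delta / (n p); a union bound over the n p pairs
   concludes. *)

Section ProductLaw.
Variables (R : realType) (m p : nat) (P : 'M[R]_(m, p)).
Variable q : 'I_m -> {set 'I_p} -> R.
Hypothesis hq : noise_model P q.

Let q_ge0 i S : 0 <= q i S := hq.1 i S.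

Let weight (x : outcome m p) := \prod_(i < m) q i (x i).

Let weight_ge0 x : 0 <= weight x.
Proof. by apply: prodr_ge0 => i _; exact: q_ge0. Qed.

Lemma marginal_ge0 i l : 0 <= P i l.
Proof. by have [_ [_ <-]] := hq; exact: sumr_ge0. Qed.

Lemma prob_compl (E : pred (outcome m p)) :
  prob q E = 1 - prob q (fun x => ~~ E x).
Proof.
have [_ [q1 _]] := hq.
have total : \sum_(x : outcome m p) weight x = 1.
  by rewrite /weight -(bigA_distr_bigA q) /=; apply: big1 => i _; rewrite q1.
by rewrite -total (bigID E) /= addrK.
Qed.

Lemma prob_bigcup (I : finType) (E : I -> pred (outcome m p)) :
  prob q (fun x => [exists i, E i x]) <= \sum_i prob q (E i).
Proof.
rewrite /prob (exchange_big_dep (fun x => [exists i, E i x])) /=; last first.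
  by move=> i x _ Eix; apply/existsP; exists i.
apply: ler_sum => x /existsP [i Eix].
by rewrite (bigD1 i) //= lerDl; apply: sumr_ge0 => j _; exact: weight_ge0.
Qed.

Lemma prob_gt_le_mgf (f : outcome m p -> R) (T lam : R) : 0 <= lam ->
  prob q (fun x => T < f x) <= \sum_x weight x * expR (lam * (f x - T)).
Proof.
move=> lam0; rewrite [X in _ <= X](bigID (fun x => T < f x)) /=.
apply: ler_wpDr.
  by apply: sumr_ge0 => x _; apply: mulr_ge0 (weight_ge0 x) (expR_ge0 _).
apply: ler_sum => x /ltW Tf; rewrite -[X in X <= _]mulr1.
apply: ler_wpM2l; first exact: weight_ge0.
apply: le_trans _ (expR_ge1Dx _); rewrite lerDl.
by apply: mulr_ge0; rewrite // subr_ge0.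
Qed.

Lemma expect_prod (f : 'I_m -> {set 'I_p} -> R) :
  \sum_x weight x * \prod_(i < m) f i (x i) =
  \prod_(i < m) \sum_(S : {set 'I_p}) q i S * f i S.
Proof.
under eq_bigr do rewrite -big_split /=.
by rewrite (bigA_distr_bigA (fun i S => q i S * f i S)).
Qed.

Lemma mgf_indicator (i : 'I_m) (l : 'I_p) (a lam : R) : a = 0 \/ a = 1 ->
  \sum_(S : {set 'I_p}) q i S * expR (lam * ((l \in S)%:R * a)) =
  1 + P i l * a * (expR lam - 1).
Proof.
move=> a01; have [_ [q1 qP]] := hq.
have bernoulli S :
    expR (lam * ((l \in S)%:R * a)) = 1 + (l \in S)%:R * (a * (expR lam - 1)).
  by case: (boolP (l \in S)) => _; case: a01 => ->;
    rewrite /= ?(mulr0, mul0r, mul1r, mulr1, expR0, addr0) // addrC subrK.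
under eq_bigr do rewrite bernoulli mulrDr mulr1.
rewrite big_split /= q1 -qP -mulrA mulr_suml [in RHS]big_mkcond /=.
by congr (_ + _); apply: eq_bigr => S _; case: (boolP (l \in S)) => _;
  rewrite ?mul1r ?mul0r ?mulr0.
Qed.

Lemma chernoff_bound (a : 'I_m -> R) (l : 'I_p) (T lam : R) :
  (forall i, a i = 0 \/ a i = 1) -> 0 <= lam ->
  prob q (fun x => T < \sum_(i < m | l \in x i) a i) <=
  expR ((expR lam - 1) * \sum_(i < m) P i l * a i - lam * T).
Proof.
move=> a01 lam0; apply: le_trans (prob_gt_le_mgf _ _ lam0) _.
have factor x : expR (lam * (\sum_(i < m | l \in x i) a i - T)) =
    expR (- (lam * T)) * \prod_(i < m) expR (lam * ((l \in x i)%:R * a i)).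
  rewrite -expR_sum -expRD mulrBr addrC mulr_sumr big_mkcond /=.
  by congr (expR (_ + _)); apply: eq_bigr => i _; case: (boolP (l \in x i)) => _;
    rewrite ?mul1r ?mul0r ?mulr0.
under eq_bigr do rewrite factor mulrCA.
rewrite -mulr_sumr (expect_prod (fun i S => expR (lam * ((l \in S)%:R * a i)))).
under eq_bigr do rewrite mgf_indicator //.
have z1 : 0 <= expR lam - 1 by rewrite subr_ge0 -[leLHS]expR0 ler_expR.
apply: (@le_trans _ _ (expR (- (lam * T)) *
    \prod_(i < m) expR (P i l * a i * (expR lam - 1)))).
  rewrite ler_wpM2l ?expR_ge0 //; apply: ler_prod => i _.
  rewrite expR_ge1Dx andbT addr_ge0 // !mulr_ge0 ?marginal_ge0 //.
  by case: (a01 i) => ->.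
rewrite -expR_sum -expRD addrC mulr_sumr.
by under eq_bigr do rewrite mulrC.
Qed.

End ProductLaw.

Lemma ranking_partial_row01 (R : realType) (m n : nat) (Rk : 'M[R]_(m, n))
    (J : pred 'I_n) (i : 'I_m) :
  is_ranking Rk -> \sum_(j | J j) Rk i j = 0 \/ \sum_(j | J j) Rk i j = 1.
Proof.
case=> entry01 [row_le1 _].
have Rk_ge0 j : 0 <= Rk i j by case: (entry01 i j) => ->.
have [[j /andP [Jj /eqP Rij]] | no_one] :=
  altP (@existsP _ (fun j => J j && (Rk i j == 1))).
- right; apply: le_anti; apply/andP; split.
    by apply: le_trans (row_le1 i); rewrite [leRHS](bigID J) /= lerDl sumr_ge0.
  by rewrite (bigD1 j) //= Rij lerDl sumr_ge0.
- left; apply: big1 => j Jj; case: (entry01 i j) => // Rij.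
  by have /existsPn /(_ j) := no_one; rewrite Jj Rij eqxx.
Qed.

Lemma expR_le_invB (R : realType) (x : R) : x < 1 -> expR x <= (1 - x)^-1.
Proof.
move=> x1; rewrite -[expR x]invrK -expRN lef_pV2 ?posrE ?subr_gt0 ?expR_gt0 //.
exact: expR_ge1Dx.
Qed.

Lemma ln2_ge (R : realType) : 1 / 9 <= ln (2 : R).
Proof.
rewrite -ler_expR lnK ?posrE //; apply: le_trans (expR_le_invB _) _; first lra.
have -> : (1 - 1 / 9 : R)^-1 = 9 / 8 by field.
lra.
Qed.

Lemma expR_chernoff_le (R : realType) (g : R) : 0 <= g ->
  expR (g / (4 + 3 * g)) - 1 <= g / (4 + 2 * g).
Proof.
move=> g0; have D : 0 < 4 + 3 * g by lra.
have -> : g / (4 + 2 * g) = (1 - g / (4 + 3 * g))^-1 - 1.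
  by field; apply/andP; split; apply/lt0r_neq0; lra.
rewrite lerD2r expR_le_invB // ltr_pdivrMr //; lra.
Qed.

Lemma chernoff_gap (R : realType) (s g : R) : 1 <= s -> 0 <= g ->
  g / (4 + 2 * g) * (1 + (1 - (2 * s)^-1) * g) -
    g / (4 + 3 * g) * (1 + s ^+ 2 * g) <= - (g ^+ 2 / (4 * (4 + 3 * g))).
Proof.
move=> s1 g0; set a := 1 - (2 * s)^-1.
have as_eq : a * s = s - 1 / 2 by rewrite /a; field; apply/lt0r_neq0; lra.
have coef2 : 1 + 4 * a - 4 * s ^+ 2 <= -1.
  suff : s * (1 + 4 * a - 4 * s ^+ 2) <= s * -1 by rewrite ler_pM2l //; lra.
  have -> : s * (1 + 4 * a - 4 * s ^+ 2) = s + 4 * (a * s) - 4 * s ^+ 3 by ring.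
  by rewrite as_eq; nra.
have coef3 : 3 * a - 2 * s ^+ 2 <= - (1 / 2).
  suff : s * (3 * a - 2 * s ^+ 2) <= s * - (1 / 2) by rewrite ler_pM2l //; lra.
  have -> : s * (3 * a - 2 * s ^+ 2) = 3 * (a * s) - 2 * s ^+ 3 by ring.
  by rewrite as_eq; nra.
have D1 : 0 < 4 + 2 * g by lra.
have D2 : 0 < 4 + 3 * g by lra.
have -> : g / (4 + 2 * g) * (1 + a * g) - g / (4 + 3 * g) * (1 + s ^+ 2 * g) =
    (g ^+ 2 * ((1 + 4 * a - 4 * s ^+ 2) + g * (3 * a - 2 * s ^+ 2))) /
    ((4 + 2 * g) * (4 + 3 * g)).
  by field; rewrite !lt0r_neq0.
have -> : - (g ^+ 2 / (4 * (4 + 3 * g))) =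
    (g ^+ 2 * (-1 + g * - (1 / 2))) / ((4 + 2 * g) * (4 + 3 * g)).
  by field; rewrite !lt0r_neq0.
rewrite ler_pM2r ?invr_gt0 ?mulr_gt0 // ler_wpM2l ?sqr_ge0 // lerD //.
exact: ler_wpM2l.
Qed.

Lemma chernoff_budget (R : realType) (u g L L' : R) :
  1 <= u -> 0 <= g -> 0 <= L' -> L' + 1 / 9 <= L -> 144 * L ^+ 2 <= u * g ^+ 2 ->
  4 * L' * (4 + 3 * g) <= u * g ^+ 2.
Proof.
move=> u1 g0 L'0 hL hug.
have ug : 12 * L <= u * g.
  have : (12 * L) ^+ 2 <= (u * g) ^+ 2 by rewrite exprMn mulrA; nra.
  by rewrite ler_pXn2r // ?nnegrE; nra.
(* Weight 144 L^2 <= u g^2 by L - L' and 12 L <= u g by L' g; the margin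
   L - L' >= 1/9 pays for the constant term 16 L'. *)
have sq_part : (L - L') * (144 * L ^+ 2) <= (L - L') * (u * g ^+ 2).
  by rewrite ler_wpM2l //; lra.
have lin_part : L' * g * (12 * L) <= L' * g * (u * g) by rewrite ler_wpM2l ?mulr_ge0.
have margin : L * (16 * L') <= L * (144 * (L - L') * L) by nra.
suff : L * (4 * L' * (4 + 3 * g)) <= L * (u * g ^+ 2) by rewrite ler_pM2l //; lra.
nra.
Qed.

Lemma chernoff_exponent_le (R : realType) (s g u L L' mu : R) :
  1 <= s -> 0 <= g -> 1 <= u -> 0 <= L' -> L' + 1 / 9 <= L ->
  144 * L ^+ 2 <= u * g ^+ 2 -> mu <= u * (1 + (1 - (2 * s)^-1) * g) ->
  (expR (g / (4 + 3 * g)) - 1) * mu - g / (4 + 3 * g) * (u * (1 + s ^+ 2 * g))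
  <= - L'.
Proof.
move=> s1 g0 u1 L'0 hL hug hmu.
have D1 : 0 < 4 + 2 * g by lra.
have D2 : 0 < 4 + 3 * g by lra.
have a0 : 0 <= 1 - (2 * s)^-1.
  by rewrite subr_ge0 invf_le1; lra.
have z1 : 0 <= expR (g / (4 + 3 * g)) - 1.
  by rewrite subr_ge0 -[leLHS]expR0 ler_expR divr_ge0 //; lra.
have step : (expR (g / (4 + 3 * g)) - 1) * mu <=
    g / (4 + 2 * g) * (u * (1 + (1 - (2 * s)^-1) * g)).
  apply: le_trans (ler_wpM2l z1 hmu) _; apply: ler_wpM2r (expR_chernoff_le g0).
  by rewrite mulr_ge0 // ?addr_ge0 ?mulr_ge0 //; lra.
apply: le_trans (lerB step (lexx _)) _.
rewrite mulrCA [X in _ - X]mulrCA -mulrBr.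
apply: le_trans (ler_wpM2l _ (chernoff_gap s1 g0)) _; first lra.
have budget := chernoff_budget u1 g0 L'0 hL hug.
by rewrite mulrN lerN2 mulrA ler_pdivlMr ?mulr_gt0 //; nra.
Qed.

Lemma ln_ratio_bounds (R : realType) (N : nat) (delta : R) :
  (0 < N)%N -> 0 < delta <= 1 ->
  0 <= ln (N%:R / delta) /\ ln (N%:R / delta) + 1 / 9 <= ln ((2 * N)%:R / delta).
Proof.
move=> N0 /andP [d0 d1].
have Nd : 0 < N%:R / delta by rewrite divr_gt0 ?ltr0n.
split.
  by rewrite ln_ge0 // ler_pdivlMr // mul1r (le_trans d1) // ler1n.
by rewrite natrM -mulrA [X in _ <= X]lnM ?posrE // addrC lerD2r ln2_ge.
Qed.

Lemma gamma_sqr_ge (R : realType) (n p : nat) (U : 'I_n -> 'I_p -> nat)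
    (delta : R) (k : 'I_n) (l : 'I_p) : (0 < U k l)%N ->
  144 * ln ((2 * n * p)%:R / delta) ^+ 2 <= (U k l)%:R * gamma U delta k ^+ 2.
Proof.
move=> U0; set M := \big[Num.max/0]_(l0 < p) Num.sqrt (((U k l0)%:R)^-1 : R).
have u0 : 0 < (U k l)%:R :> R by rewrite ltr0n.
have hM : Num.sqrt (((U k l)%:R)^-1) <= M.
  exact: (le_bigmax 0 (fun l0 => Num.sqrt (((U k l0)%:R)^-1 : R)) l).
have hM2 : ((U k l)%:R)^-1 <= M ^+ 2.
  rewrite -[leLHS]sqr_sqrtr ?invr_ge0 ?ler0n //.
  by rewrite ler_pXn2r ?nnegrE ?sqrtr_ge0 // (le_trans (sqrtr_ge0 _) hM).
have : (U k l)%:R * ((U k l)%:R)^-1 <= (U k l)%:R * M ^+ 2 by rewrite ler_pM2l.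
rewrite mulfV ?lt0r_neq0 // /gamma -/M => uM.
have -> : (U k l)%:R * (12 * ln ((2 * n * p)%:R / delta) * M) ^+ 2 =
    144 * ln ((2 * n * p)%:R / delta) ^+ 2 * ((U k l)%:R * M ^+ 2) by ring.
by rewrite -[leLHS]mulr1 ler_wpM2l // mulr_ge0 // sqr_ge0.
Qed.

Lemma gamma_ge0 (R : realType) (n p : nat) (U : 'I_n -> 'I_p -> nat)
    (delta : R) (k : 'I_n) :
  0 <= ln ((2 * n * p)%:R / delta) -> 0 <= gamma U delta k.
Proof.
move=> L0; rewrite /gamma mulr_ge0 ?mulr_ge0 //.
apply: (big_ind (fun x => 0 <= x)) => // [x y x0 _|l _]; last exact: sqrtr_ge0.
by rewrite le_max x0.
Qed.

Lemma top_count_tail_le (R : realType) (m n p : nat) (c : R)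
    (P : 'M[R]_(m, p)) (U : 'I_n -> 'I_p -> nat) (q : 'I_m -> {set 'I_p} -> R)
    (delta : R) (Rk : 'M[R]_(m, n)) (k : 'I_n) (l : 'I_p) :
  1 < c -> (0 < U k l)%N -> noise_model P q -> 0 < delta <= 1 -> is_ranking Rk ->
  \sum_(i < m) \sum_(j < n | (j <= k)%N) P i l * Rk i j <=
    (U k l)%:R * (1 + (1 - (2 * Num.sqrt c)^-1) * gamma U delta k) ->
  prob q (fun x => (U k l)%:R * (1 + c * gamma U delta k) < top_count Rk x k l)
  <= delta / (n * p)%:R.
Proof.
move=> c1 U0 hq hd hR hmu.
set g := gamma U delta k; set s := Num.sqrt c.
have s1 : 1 <= s by rewrite -sqrtr1 ler_sqrt; lra.
have ss : s ^+ 2 = c by rewrite sqr_sqrtr //; lra.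
have np0 : (0 < n * p)%N.
  by rewrite muln_gt0 (leq_ltn_trans (leq0n k) (ltn_ord k)) (leq_ltn_trans (leq0n l)).
have [L'0 hL] := ln_ratio_bounds np0 hd.
rewrite mulnA in hL.
have g0 : 0 <= g by apply: gamma_ge0; lra.
have lam0 : 0 <= g / (4 + 3 * g) by rewrite divr_ge0 //; lra.
have a01 i := ranking_partial_row01 (fun j : 'I_n => (j <= k)%N) i hR.
apply: le_trans (chernoff_bound hq l _ a01 lam0) _.
have /andP [d0 _] := hd.
have -> : delta / (n * p)%:R = expR (- ln ((n * p)%:R / delta)).
  by rewrite expRN lnK ?posrE ?divr_gt0 ?ltr0n // invf_div.
rewrite ler_expR -ss.
under eq_bigr do rewrite mulr_sumr.
by apply: (chernoff_exponent_le s1 g0 _ L'0 hL (gamma_sqr_ge delta U0) hmu);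
  rewrite ler1n.
Qed.

Theorem proposition6p1 (R : realType) (m n p : nat) (c : R)
    (P : 'M[R]_(m, p)) (W : 'M[R]_(m, n)) (U : 'I_n -> 'I_p -> nat)
    (q : 'I_m -> {set 'I_p} -> R) (delta : R) (Rk : 'M[R]_(m, n)) :
  1 < c ->
  (forall i l, 0 <= P i l <= 1) ->
  (forall k l, (0 < U k l)%N) ->
  noise_model P q ->
  0 < delta <= 1 ->
  is_ranking Rk ->
  (forall (l : 'I_p) (k : 'I_n),
      \sum_(i < m) \sum_(j < n | (j <= k)%N) P i l * Rk i j <=
      (U k l)%:R * (1 + (1 - (2 * Num.sqrt c)^-1) * gamma U delta k)) ->
  satisfies_constraint q U Rk (fun k => c * gamma U delta k) delta.
Proof.
move=> c1 _ U0 hq hd hR hyp; have /andP [d0 _] := hd.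
rewrite /satisfies_constraint (prob_compl hq) lerD2l lerN2.
set bad := fun k l x => (U k l)%:R * (1 + c * gamma U delta k) < top_count Rk x k l.
rewrite [prob _ _](_ : _ = prob q (fun x => [exists k, exists l, bad k l x])); last first.
  by apply: eq_bigl => x; rewrite negb_forall; apply: eq_existsb => k;
    rewrite negb_forall; apply: eq_existsb => l; rewrite -ltNge.
apply: le_trans (prob_bigcup hq _) _.
apply: (@le_trans _ _ (\sum_(k < n) \sum_(l < p) delta / (n * p)%:R)).
  apply: ler_sum => k _; apply: le_trans (prob_bigcup hq _) _.
  by apply: ler_sum => l _; exact: top_count_tail_le c1 (U0 k l) hq hd hR (hyp l k).
rewrite !sumr_const !card_ord -mulrnA [(p * n)%N]mulnC.
rewrite -(mulr_natr (delta / (n * p)%:R)).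
have [->|np0] := posnP (n * p); first by rewrite mulr0; lra.
by rewrite divfK // pnatr_eq0 -lt0n.
Qed.
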